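(* Let $\mathcal A,\mathcal B\subseteq 2^\omega$ be measurable. (i) If $\mathcal A\setminus\mathcal B$ is negligible, then $(\mathcal A)^{\equiv_T}\setminus(\mathcal B)^{\equiv_T}$ is negligible; in particular $(\mathcal A)^{\equiv_T}\le_{LV}(\mathcal B)^{\equiv_T}$. (ii) If $\mathcal A\subseteq\mathcal B$, then $(\mathcal A)^{\equiv_T}\le_{LV}(\mathcal B)^{\equiv_T}$.
   Context: $(\mathcal A)^{\equiv_T}=\{X:\exists Y\in\mathcal A\ X\equiv_T Y\}$. Let $M$ be a universal left-c.e. semi-measure and $\overline M(\sigma)=\inf_n\sum_{\tau\succeq\sigma,|\tau|=n}M(\tau)$ extended to a Borel measure; $\mathcal C$ is negligible if $\overline M(\mathcal C)=0$; equivalently, $\lambda(\bigcup_i\Phi_i^{-1}(\mathcal C))=0$ where $(\Phi_i)$ enumerates all Turing functionals. For Turing-invariant sets $\mathcal A,\mathcal B$, $\mathcal A\le_{LV}\mathcal B$ means $\mathcal A\setminus\mathcal B$ is negligible. *)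

From HB Require Import structures.
From mathcomp Require Import all_boot all_order all_algebra.
From mathcomp Require Import all_classical all_reals.
From mathcomp Require Import ereal sequences measure.
Set Implicit Arguments. Unset Strict Implicit. Unset Printing Implicit Defensive.
Import Order.TTheory GRing.Theory Num.Theory.
Local Open Scope classical_set_scope.
Local Open Scope ring_scope.

Definition cantor := nat -> bool.

Definition cyl (s : seq bool) : set cantor :=
  [set X | forall i, (i < size s)%N -> X i = nth false s i].

Definition lambda_star (R : realType) (S : set cantor) : \bar R :=
  ereal_inf [set x | exists c : nat -> seq bool,
    S `<=` \bigcup_i cyl (c i) /\
    x = (\sum_(0 <= i <oo) (((2%:R : R) ^- (size (c i)))%:E))%E].

Definition lmeasurable (R : realType) (A : set cantor) : Prop :=
  caratheodory_measurable (@lambda_star R) A.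

Definition lnull (R : realType) (S : set cantor) : Prop :=
  lambda_star R S = 0%E.

(** Cantor pairing function (a bijection nat*nat -> nat). *)
Definition pairn (x y : nat) : nat := ((x + y) * (x + y).+1) %/ 2 + y.

(** Codes of partial recursive functions nat -> nat relative to an oracle. *)
Inductive code : Type :=
| CZero | CSucc | CId | CFst | CSnd | COracle
| CComp of code & code   (* CComp f g = f o g *)
| CPair of code & code
| CRec of code & code
| CMu of code.

Inductive eval (X : cantor) : code -> nat -> nat -> Prop :=
| ev_zero n : eval X CZero n 0
| ev_succ n : eval X CSucc n n.+1
| ev_id n : eval X CId n n
| ev_fst a b : eval X CFst (pairn a b) a
| ev_snd a b : eval X CSnd (pairn a b) b
| ev_oracle n : eval X COracle n (nat_of_bool (X n))
| ev_comp f g n m k : eval X g n m -> eval X f m k -> eval X (CComp f g) n k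
| ev_pair f g n a b : eval X f n a -> eval X g n b ->
    eval X (CPair f g) n (pairn a b)
| ev_rec0 f g x a : eval X f x a -> eval X (CRec f g) (pairn x 0) a
| ev_recS f g x n a b : eval X (CRec f g) (pairn x n) a ->
    eval X g (pairn x (pairn n a)) b -> eval X (CRec f g) (pairn x n.+1) b
| ev_mu f x n : eval X f (pairn x n) 0 ->
    (forall m, (m < n)%N -> exists k, eval X f (pairn x m) k.+1) ->
    eval X (CMu f) x n.

Definition phi_val (e : code) (Z Y : cantor) : Prop :=
  forall n, eval Z e n (nat_of_bool (Y n)).

Definition phi_pre (e : code) (C : set cantor) : set cantor :=
  [set Z | exists Y, C Y /\ phi_val e Z Y].

Definition turing_le (X Y : cantor) : Prop := exists e, phi_val e Y X.
Definition turing_equiv (X Y : cantor) : Prop := turing_le X Y /\ turing_le Y X.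

Definition tclosure (A : set cantor) : set cantor :=
  [set X | exists Y, A Y /\ turing_equiv X Y].

Definition negligible (R : realType) (C : set cantor) : Prop :=
  lnull R (\bigcup_(e in [set: code]) phi_pre e C).

Definition le_LV (R : realType) (A B : set cantor) : Prop :=
  negligible R (A `\` B).

From Pilot Require Import Defs.
From mathcomp Require Import all_boot all_order all_algebra.
From mathcomp Require Import all_classical all_reals.
From mathcomp Require Import ereal sequences measure normedtype.
Import Defs.
Import Order.TTheory GRing.Theory Num.Theory.
Local Open Scope classical_set_scope.

(* Turing functionals are closed under composition, so the union of the
   preimages of the Turing-downward closure of a class under all functionals
   is the union of the preimages of the class itself; hence negligibility
   passes from C to its Turing closure.  Moreover
   tclosure A \ tclosure B is contained in tclosure (A \ B), and for
   A <= B the difference A \ B is empty. *)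

Fixpoint subst_oracle (d e : code) : code :=
  match d with
  | COracle => e
  | CComp f g => CComp (subst_oracle f e) (subst_oracle g e)
  | CPair f g => CPair (subst_oracle f e) (subst_oracle g e)
  | CRec f g => CRec (subst_oracle f e) (subst_oracle g e)
  | CMu f => CMu (subst_oracle f e)
  | d => d
  end.

(* By a fixpoint rather than [eval_ind], which gives no induction hypothesis
   for the premise of [ev_mu] quantified over smaller [m]. *)
Lemma eval_subst_oracle (X Z : cantor) (e : code) :
  phi_val e Z X ->
  forall d n m, eval X d n m -> eval Z (subst_oracle d e) n m.
Proof.
move=> eZX; fix IH 4 => d n m H; case: H => /=.
- exact: ev_zero.
- exact: ev_succ.
- exact: ev_id.
- exact: ev_fst.
- exact: ev_snd.
- exact: eZX.
- by move=> f g {}n k {}m Hg Hf; apply: ev_comp (IH _ _ _ Hg) (IH _ _ _ Hf).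
- by move=> f g {}n a b Hf Hg; apply: ev_pair (IH _ _ _ Hf) (IH _ _ _ Hg).
- by move=> f g x a Hf; apply: ev_rec0 (IH _ _ _ Hf).
- by move=> f g x k a b Hr Hg; apply: ev_recS (IH _ _ _ Hr) (IH _ _ _ Hg).
- move=> f x k Hf Hlt; apply: ev_mu (IH _ _ _ Hf) _ => j /Hlt[i Hi].
  by exists i; apply: IH.
Qed.

Lemma phi_val_comp (d e : code) (X Y Z : cantor) :
  phi_val d X Y -> phi_val e Z X -> phi_val (subst_oracle d e) Z Y.
Proof. by move=> dXY eZX n; apply: eval_subst_oracle eZX _ _ _ (dXY n). Qed.

Lemma tclosureD (A B : set cantor) :
  tclosure A `\` tclosure B `<=` tclosure (A `\` B).
Proof.
move=> Y [[W [AW YW]] nBY]; exists W; split=> //; split=> // BW.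
by apply: nBY; exists W.
Qed.

Lemma bigcup_phi_pre_tclosure (C : set cantor) :
  \bigcup_(e in [set: code]) phi_pre e (tclosure C) `<=`
  \bigcup_(e in [set: code]) phi_pre e C.
Proof.
move=> Z [e _ [Y [[W [CW [_ [d dWY]]]] eZY]]].
by exists (subst_oracle d e) => //; exists W; split=> //; apply: phi_val_comp eZY.
Qed.

Section NullSets.
Variable R : realType.

Lemma lambda_star_ge0 (S : set cantor) : (0 <= lambda_star R S)%E.
Proof.
apply: le_ereal_inf_tmp => _ [c [_ ->]].
by apply: nneseries_ge0 => i _ _; rewrite lee_fin.
Qed.

Lemma le_lambda_star (S T : set cantor) :
  S `<=` T -> (lambda_star R S <= lambda_star R T)%E.
Proof.
move=> ST; apply: le_ereal_inf_tmp => _ [c [cov ->]].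
by apply: ereal_inf_lbound; exists c; split=> //; apply: subset_trans cov.
Qed.

(* Cover by the cylinders of [0^(k+i+1)], of total weight [2^-k]. *)
Lemma lambda_star0 : lambda_star R set0 = 0%E.
Proof.
apply/eqP; rewrite eq_le lambda_star_ge0 andbT.
apply/lee_addgt0Pr => eps eps_gt0; rewrite add0e.
have [k _ /(_ k (leqnn k)) k_small] := near_infty_natSinv_expn_lt (PosNum eps_gt0).
apply: (@le_trans _ _ (((2%:R : R) ^- k)%:E)); last first.
  by rewrite lee_fin -div1r ltW.
apply: ge_ereal_inf.
exists (\sum_(0 <= i <oo) (((2%:R : R) ^- (size (nseq (k + i.+1) false)))%:E))%E.
  by exists (fun i => nseq (k + i.+1) false); split.
rewrite (@eq_eseriesr _ _ (fun i => ((2%:R : R) ^- k / (2 ^ i.+1)%:R)%:E)).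
  by apply: epsilon_trick0; rewrite invr_ge0 exprn_ge0.
by move=> i _; rewrite size_nseq exprD invfM natrX.
Qed.

Lemma lnullS (S T : set cantor) : S `<=` T -> lnull R T -> lnull R S.
Proof.
move=> ST nullT; apply/eqP; rewrite eq_le lambda_star_ge0 andbT -nullT.
exact: le_lambda_star.
Qed.

Lemma negligibleS (C D : set cantor) : C `<=` D -> negligible R D -> negligible R C.
Proof.
move=> CD; apply: lnullS => Z [e _ [Y [CY eZY]]].
by exists e => //; exists Y; split=> //; apply: CD.
Qed.

Lemma negligible0 : negligible R set0.
Proof. by apply: lnullS lambda_star0 => Z [e _ [Y [[]]]]. Qed.

Lemma negligible_tclosure (C : set cantor) :
  negligible R C -> negligible R (tclosure C).
Proof. exact: lnullS (bigcup_phi_pre_tclosure C). Qed.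

End NullSets.

Theorem lemma4p10 (R : realType) (A B : set cantor) :
  lmeasurable R A -> lmeasurable R B ->
  (negligible R (A `\` B) ->
     negligible R (tclosure A `\` tclosure B) /\
     le_LV R (tclosure A) (tclosure B)) /\
  (A `<=` B -> le_LV R (tclosure A) (tclosure B)).
Proof.
move=> _ _.
have part_i : negligible R (A `\` B) ->
    negligible R (tclosure A `\` tclosure B).
  by move=> /negligible_tclosure; apply: negligibleS (tclosureD A B).
split; first by move=> /part_i.
move=> AB; apply: part_i; apply: negligibleS (negligible0 R).
by move=> Y [/AB].
Qed.
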